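(* For every simple graph $G$, $\alpha(G)\leq\vartheta^*(G)\leq\vartheta'(G)$.
   Context: Let $G=(V,E)$, $V=\{1,\dots,n\}$, have adjacency matrix $A=[a_{ij}]$ and degrees $d_j$; $\alpha(G)$ is its independence number. For $x\in\mathbb{R}^n$ and symmetric $W=[w_{ij}]\in\mathbb{R}^{n\times n}$ let $L(x,W)=\begin{bmatrix}1&x^\top\\ x&W\end{bmatrix}$ and $\mathrm{diag}(W)=(w_{11},\dots,w_{nn})$. Define $\mathrm{TH}'(G)=\{x\mid \exists$ symmetric $W$ with $\mathrm{diag}(W)=x$, $L(x,W)\succeq 0$, $w_{ij}=0$ for all $\{i,j\}\in E$, and $W\geq 0$ entrywise$\}$ and $\vartheta'(G)=\max\{\mathbf{e}^\top x\mid x\in\mathrm{TH}'(G)\}$. Let $P^*$ be the set of pairs $(x,W)$, $W$ symmetric with $\mathrm{diag}(W)=x$, satisfying for all $i,j\in V$: $w_{ij}\geq 0$; $x_i\geq w_{ij}$; $w_{ij}+1\geq x_i+x_j$; $w_{ij}-x_i+\sum_{k\in V}a_{jk}w_{ik}\geq 0$; $x_j+x_i-w_{ij}-1+\sum_{k\in V}a_{jk}(x_k-w_{ik})\geq 0$; $(d_j+1)(x_i-w_{ij})-\sum_{k\in V}a_{jk}w_{ik}\geq 0$; $(d_j+1)(1+w_{ij}-x_j-x_i)+\sum_{k\in V}a_{jk}(w_{ik}-x_k)\geq 0$. (These are the linearizations, with $x_ix_j\mapsto w_{ij}$, $x_i^2\mapsto x_i$, of products of the constraints $0\le x\le \mathbf{e}$,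 $(A+I)x-\mathbf{e}\ge 0$, $(D-I)(\mathbf{e}-x)-((A+I)x-\mathbf{e})\ge 0$ with $x_i$ and $1-x_i$, $D$ the degree diagonal matrix.) Define $\mathrm{TH}^*(G)=\{x\mid\exists$ symmetric $W$ with $\mathrm{diag}(W)=x$, $L(x,W)\succeq 0$, $(x,W)\in P^*\}$ and $\vartheta^*(G)=\max\{\mathbf{e}^\top x\mid x\in\mathrm{TH}^*(G)\}$. *)

From HB Require Import structures.
From mathcomp Require Import all_boot all_order all_algebra.
From mathcomp Require Import boolp classical_sets reals.
Set Implicit Arguments. Unset Strict Implicit. Unset Printing Implicit Defensive.
Import Order.TTheory GRing.Theory Num.Theory.
Local Open Scope ring_scope.

Section Theta.
Variables (R : realType) (n : nat) (e : rel 'I_n).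

Definition adjm : 'M[R]_n := \matrix_(i, j) (if e i j then 1 else 0).
Definition degr (j : 'I_n) : R := (#|[set k | e j k]|)%:R.

Definition indep (S : {set 'I_n}) : bool :=
  [forall i in S, forall j in S, ~~ e i j].
Definition alpha : nat := \max_(S : {set 'I_n} | indep S) #|S|.

Definition psd m (M : 'M[R]_m) : Prop :=
  forall v : 'cV[R]_m, 0 <= (v^T *m M *m v) 0 0.

Definition Lmat (x : 'cV[R]_n) (W : 'M[R]_n) : 'M[R]_(1 + n) :=
  block_mx 1 x^T x W.

Definition diag_is (x : 'cV[R]_n) (W : 'M[R]_n) : Prop :=
  forall i, W i i = x i 0.

Definition THp (x : 'cV[R]_n) : Prop :=
  exists W : 'M[R]_n, W^T = W /\ diag_is x W /\ psd (Lmat x W) /\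
    (forall i j, e i j -> W i j = 0) /\ (forall i j, 0 <= W i j).

Definition Pstar (x : 'cV[R]_n) (W : 'M[R]_n) : Prop :=
  forall i j : 'I_n,
  0 <= W i j /\
  W i j <= x i 0 /\
  x i 0 + x j 0 <= W i j + 1 /\
  0 <= W i j - x i 0 + \sum_k adjm j k * W i k /\
  0 <= x j 0 + x i 0 - W i j - 1 + \sum_k adjm j k * (x k 0 - W i k) /\
  0 <= (degr j + 1) * (x i 0 - W i j) - \sum_k adjm j k * W i k /\
  0 <= (degr j + 1) * (1 + W i j - x j 0 - x i 0)
         + \sum_k adjm j k * (W i k - x k 0).

Definition THs (x : 'cV[R]_n) : Prop :=
  exists W : 'M[R]_n, W^T = W /\ diag_is x W /\ psd (Lmat x W) /\ Pstar x W.

Definition esum (x : 'cV[R]_n) : R := \sum_i x i 0.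

(* theta'(G) and theta*(G): max of e^T x over the set (taken as the sup) *)
Definition theta_p : R := sup [set esum x | x in THp].
Definition theta_s : R := sup [set esum x | x in THs].

End Theta.

(* The indicator vector x of a maximum independent set S, with W = x x^T, lies in
   TH*(G): L(x, W) is a Gram matrix, and every constraint of P* is the product of
   two linear constraints that the 0/1 point x satisfies, because S is independent
   and, being maximum, dominating.  Hence alpha(G) = e^T x <= theta*(G).  Conversely
   P* forces w_ij = 0 on edges, since the sixth constraint at i = j bounds the
   nonnegative sum of the w_ik over the neighbours k of i by 0; so TH*(G) is
   contained in TH'(G), which is bounded because x_i^2 <= x_i. *)
From HB Require Import structures.
From mathcomp Require Import all_boot all_order all_algebra.
From mathcomp Require Import boolp classical_sets reals.
From mathcomp Require Import ring lra.
Import Order.TTheory GRing.Theory Num.Theory.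
Set Implicit Arguments. Unset Strict Implicit. Unset Printing Implicit Defensive.
Local Open Scope ring_scope.

Section MaximumIndependentSet.
Variables (n : nat) (e : rel 'I_n).

Lemma alpha_attained : exists2 S, indep e S & #|S| = alpha e.
Proof.
have [|S indS maxE] := @eq_bigmax_cond _ (indep e) (fun S => #|S|).
  apply/card_gt0P; exists finset.set0; rewrite unfold_in.
  by apply/forallP => i; rewrite inE.
by exists S; [move: indS; rewrite unfold_in | rewrite /alpha maxE].
Qed.

Hypotheses (e_sym : symmetric e) (e_irr : irreflexive e).

Lemma maximum_indep_dominating (S : {set 'I_n}) :
  indep e S -> #|S| = alpha e -> forall j, j \notin S -> exists2 k, k \in S & e j k.
Proof.
move=> indS cardS j jS; apply/exists_inP; apply: contraNT (jS) => noNbr.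
have indjS : indep e (j |: S).
  apply/forall_inP => a; rewrite in_setU1 => /predU1P aS.
  apply/forall_inP => b; rewrite in_setU1 => /predU1P bS.
  case: aS bS => [-> | aS] [-> | bS]; first by rewrite e_irr.
  - by apply: contra noNbr => ejb; apply/exists_inP; exists b.
  - by rewrite e_sym; apply: contra noNbr => eja; apply/exists_inP; exists a.
  - by move/forall_inP: indS => /(_ a aS) /forall_inP /(_ b bS).
have := @leq_bigmax_cond _ (indep e) (fun S => #|S|) _ indjS.
by rewrite -/(alpha e) -cardS cardsU1 jS add1n ltnn.
Qed.

End MaximumIndependentSet.

Section LiftedMatrix.
Variables (R : realType) (n : nat).

Lemma psd_Lmat_sqr_le (x : 'cV[R]_n) (W : 'M[R]_n) :
  diag_is x W -> psd (Lmat x W) -> forall i, x i 0 ^+ 2 <= x i 0.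
Proof.
move=> diagW psdL i.
have := psdL (col_mx (const_mx (- x i 0)) (delta_mx i 0)).
rewrite /Lmat tr_col_mx mul_row_block mul_row_col trmx_delta.
rewrite mulmx1 !mulmxDl -!rowE -[(_ *m x^T) *m _]mulmxA -!colE.
rewrite !mxE !big_ord1 !mxE diagW (_ : ord0 = 0) //.
by move=> h; nra.
Qed.

Lemma psd_Lmat_rank_one (x : 'cV[R]_n) : psd (Lmat x (x *m x^T)).
Proof.
have -> : Lmat x (x *m x^T) = col_mx 1 x *m (col_mx 1 x)^T.
  by rewrite tr_col_mx mul_col_row trmx1 !mulmx1 mul1mx.
move=> v; rewrite -!mulmxA mulmxA -{1}(trmxK (col_mx 1 x)) -trmx_mul.
by rewrite mxE big_ord1 mxE sqr_ge0.
Qed.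

End LiftedMatrix.

Section Relaxations.
Variables (R : realType) (n : nat) (e : rel 'I_n).

Lemma adjmE j k : adjm R e j k = (e j k)%:R.
Proof. by rewrite mxE; case: (e j k). Qed.

Lemma Pstar_edge_eq0 (x : 'cV[R]_n) (W : 'M[R]_n) i j :
  diag_is x W -> Pstar e x W -> e i j -> W i j = 0.
Proof.
move=> diagW PW eij.
have W0 k : 0 <= W i k by case: (PW i k).
have [_ [_ [_ [_ [_ [nbr_le0 _]]]]]] := PW i i.
rewrite diagW subrr mulr0 sub0r oppr_ge0 (bigD1 j) //= adjmE eij mul1r in nbr_le0.
apply/eqP; rewrite eq_le W0 andbT; apply: le_trans _ nbr_le0.
by rewrite lerDl sumr_ge0 // => k _; rewrite adjmE mulr_ge0.
Qed.

Lemma THs_sub_THp : (@THs R n e `<=` @THp R n e)%classic.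
Proof.
move=> x [W [symW [diagW [psdL PW]]]]; exists W; do 4 split => //.
  by move=> i j; apply: Pstar_edge_eq0.
by move=> i j; case: (PW i j).
Qed.

Lemma THp_esum_le (x : 'cV[R]_n) : THp e x -> esum x <= n%:R.
Proof.
case=> W [_ [diagW [psdL [_ W0]]]].
rewrite /esum -[n in n%:R]card_ord -sumr_const; apply: ler_sum => i _.
have := psd_Lmat_sqr_le diagW psdL i; have := W0 i i; rewrite diagW => *; nra.
Qed.

(* The last two hypotheses are the constraints (A+I)x >= e and
   (D-I)(e-x) >= (A+I)x - e whose products with x_i and 1 - x_i define P*. *)
Lemma Pstar_rank_one (x : 'cV[R]_n) :
  (forall i, x i 0 = 0 \/ x i 0 = 1) ->
  (forall j, 1 <= x j 0 + (adjm R e *m x) j 0) ->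
  (forall j, (adjm R e *m x) j 0 <= degr R e j * (1 - x j 0)) ->
  Pstar e x (x *m x^T).
Proof.
move=> x01 cover pack i j.
have WE k l : (x *m x^T) k l = x k 0 * x l 0 by rewrite mxE big_ord1 mxE.
have Ax0 : 0 <= (adjm R e *m x) j 0.
  rewrite mxE sumr_ge0 // => k _; rewrite adjmE.
  by case: (x01 k) => ->; rewrite ?mulr0 ?mulr1.
have deg0 : 0 <= degr R e j by rewrite ler0n.
have sumW : \sum_k adjm R e j k * (x *m x^T) i k = x i 0 * (adjm R e *m x) j 0.
  by rewrite mxE mulr_sumr; apply: eq_bigr => k _; rewrite WE; ring.
have sumxW : \sum_k adjm R e j k * (x k 0 - (x *m x^T) i k)
    = (1 - x i 0) * (adjm R e *m x) j 0.
  by rewrite mxE mulr_sumr; apply: eq_bigr => k _; rewrite WE; ring.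
have sumWx : \sum_k adjm R e j k * ((x *m x^T) i k - x k 0)
    = - ((1 - x i 0) * (adjm R e *m x) j 0).
  by rewrite -sumxW -sumrN; apply: eq_bigr => k _; ring.
rewrite sumW sumxW sumWx WE.
have := cover j; have := pack j.
by case: (x01 i) => ->; case: (x01 j) => -> *; repeat split; nra.
Qed.

Definition indicator (S : {set 'I_n}) : 'cV[R]_n := \col_i (i \in S)%:R.

Lemma indicatorE S i : indicator S i 0 = (i \in S)%:R.
Proof. by rewrite mxE. Qed.

Lemma esum_indicator S : esum (indicator S) = #|S|%:R.
Proof.
rewrite /esum -sum1_card natr_sum [RHS]big_mkcond /=.
by apply: eq_bigr => i _; rewrite indicatorE; case: (i \in S).
Qed.

Lemma adjm_indicator S j :
  (adjm R e *m indicator S) j 0 = #|[set k in S | e j k]|%:R.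
Proof.
rewrite mxE -sum1_card natr_sum [RHS]big_mkcond /=.
apply: eq_bigr => k _; rewrite adjmE indicatorE inE.
by rewrite -natrM; case: (k \in S); case: (e j k).
Qed.

Lemma indicator_THs (S : {set 'I_n}) :
  indep e S -> (forall j, j \notin S -> exists2 k, k \in S & e j k) ->
  THs e (indicator S).
Proof.
move=> indS domS; exists (indicator S *m (indicator S)^T).
split; first by rewrite trmx_mul trmxK.
split; first by move=> i; rewrite mxE big_ord1 !mxE -natrM; case: (i \in S).
split; first exact: psd_Lmat_rank_one.
apply: Pstar_rank_one => [i | j | j]; rewrite !indicatorE.
- by case: (i \in S); [right | left].
- rewrite adjm_indicator; case: (boolP (j \in S)) => jS; first by rewrite lerDl.
  have [k kS ejk] := domS j jS.
  by rewrite add0r ler1n card_gt0; apply/set0Pn; exists k; rewrite inE kS.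
- rewrite adjm_indicator; case: (boolP (j \in S)) => jS.
    suff -> : [set k in S | e j k] = finset.set0 by rewrite cards0 subrr mulr0.
    apply/setP => k; rewrite !inE; apply/andP => -[kS ejk].
    by move/forall_inP: indS => /(_ j jS) /forall_inP /(_ k kS); rewrite ejk.
  rewrite subr0 mulr1 ler_nat /degr subset_leq_card //.
  by apply/fintype.subsetP => k; rewrite !inE => /andP[].
Qed.

End Relaxations.

Theorem theorem5 (R : realType) (n : nat) (e : rel 'I_n)
  (e_sym : symmetric e) (e_irr : irreflexive e) :
  (alpha e)%:R <= theta_s R e /\ theta_s R e <= theta_p R e.
Proof.
have [S indS cardS] := alpha_attained e.
set xS := indicator R S.
have THs_xS : THs e xS.
  exact: indicator_THs indS (maximum_indep_dominating e_sym e_irr indS cardS).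
have bounded (T : set 'cV[R]_n) :
    (T `<=` @THp R n e)%classic -> has_ubound [set esum x | x in T].
  by move=> sub; exists n%:R => _ [x Tx <-]; apply/THp_esum_le/sub.
split.
  rewrite -cardS -esum_indicator; apply: ub_le_sup; last by exists xS.
  exact/bounded/THs_sub_THp.
rewrite /theta_s /theta_p; apply: sup_le.
- by move=> _ [x THs_x <-]; apply/le_down; exists x => //; apply: THs_sub_THp.
- by exists (esum xS), xS.
- split; last exact: bounded.
  by exists (esum xS), xS => //; apply: THs_sub_THp.
Qed.
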